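(* Let $U$ be a convex $2n$-gon with distinct vertices $U_1,\dots,U_{2n}$ in counterclockwise order, centered at the origin ($U_{i+n}=-U_i$, indices modulo $2n$), and let $P$ be a convex polygon with nonempty interior whose vertex list is $P_1,\dots,P_{2n}$ (consecutive entries may coincide) such that corresponding sides and diagonals are parallel: $P_{i+1}-P_i=\lambda_{i+\frac12}(U_{i+1}-U_i)$ with $\lambda_{i+\frac12}\ge0$, and $P_i-P_{i+n}$ is parallel to $U_i-U_{i+n}$, for all $i$. Then, in the Minkowski plane $(\mathbb{R}^2,U)$, $P$ has constant $U$-width.
   Context: The Minkowski plane $(\mathbb{R}^2,U)$ is $\mathbb{R}^2$ with the norm whose unit ball is $U$. The dual norm is identified with $\|v\|=\sup\{[u,v]:u\in U\}$, where $[x,y]$ is the determinant of the matrix with columns $x,y$; its unit ball is the dual unit ball. For $v$ in the dual unit circle ($\|v\|=1$), the support function of $P$ is $h(P)(v)=\sup\{[p,v]:p\in P\}$ and the width of $P$ in direction $v$ is $w(P)(v)=h(P)(v)+h(P)(-v)$. $P$ has constant $U$-width if $w(P)(v)$ does not depend on $v$. *)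

From HB Require Import structures.
From mathcomp Require Import all_boot all_order all_algebra.
From mathcomp Require Import classical_sets reals.
Set Implicit Arguments. Unset Strict Implicit. Unset Printing Implicit Defensive.
Import Order.TTheory GRing.Theory Num.Theory.
Local Open Scope ring_scope.
Local Open Scope classical_set_scope.

Section Plane.
Variable R : realType.

Definition psub (p q : R * R) : R * R := (p.1 - q.1, p.2 - q.2).
Definition popp (p : R * R) : R * R := (- p.1, - p.2).
Definition pscale (a : R) (p : R * R) : R * R := (a * p.1, a * p.2).

Definition det (x y : R * R) : R := x.1 * y.2 - x.2 * y.1.

Definition conv_hull (m : nat) (Q : nat -> R * R) : set (R * R) :=
  [set p | exists w : nat -> R,
      (forall k, 0 <= w k) /\ \sum_(k < m) w k = 1 /\
      p = (\sum_(k < m) w k * (Q k).1, \sum_(k < m) w k * (Q k).2)].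

Definition dual_norm (U : set (R * R)) (v : R * R) : R :=
  sup [set det u v | u in U].

Definition support (P : set (R * R)) (v : R * R) : R :=
  sup [set det p v | p in P].

Definition width (P : set (R * R)) (v : R * R) : R :=
  support P v + support P (popp v).

Definition constant_width (U P : set (R * R)) : Prop :=
  exists c : R, forall v, dual_norm U v = 1 -> width P v = c.

End Plane.

(* There is one constant [c] with [P k - P (k + n) = c U k] for all [k]: the
   relation holds at [k = 0] because the diagonals are parallel, and the side
   relations carry it from [k] to [k + 1].  For [v] of dual norm 1 let [U i]
   maximise [[U k, v]]; by convexity [[U k, v]] decreases from [i] to the
   antipodal index [i + n] and increases back, and since the sides of [P] are
   nonnegative multiples of those of [U], so does [[P k, v]].  Hence the width
   of [P] in direction [v] is [[P i - P (i + n), v] = c [U i, v] = c]. *)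

From Pilot Require Import Defs.
From mathcomp Require Import all_boot all_order all_algebra.
From mathcomp Require Import ring lra zify.
From mathcomp Require Import classical_sets reals.
Set Implicit Arguments. Unset Strict Implicit.
Import Order.TTheory GRing.Theory Num.Theory.
Local Open Scope ring_scope.

Section PlaneAlgebra.
Variable R : realType.
Implicit Types (l : R) (a b c d p q u v w z : R * R).

Lemma det_subl a b v : det (psub a b) v = det a v - det b v.
Proof. by rewrite /det /psub /=; ring. Qed.

Lemma det_subr v a b : det v (psub a b) = det v a - det v b.
Proof. by rewrite /det /psub /=; ring. Qed.

Lemma det_scalel l a v : det (pscale l a) v = l * det a v.
Proof. by rewrite /det /pscale /=; ring. Qed.

Lemma det_oppl a v : det (popp a) v = - det a v.
Proof. by rewrite /det /popp /=; ring. Qed.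

Lemma det_oppr a v : det a (popp v) = - det a v.
Proof. by rewrite /det /popp /=; ring. Qed.

Lemma parallel_scaleE d u w :
  det d u = 0 -> det u w != 0 -> d = pscale (det d w / det u w) u.
Proof.
case: d => d1 d2; case: u => u1 u2; case: w => w1 w2.
rewrite /det /pscale /= => hdu huw.
congr pair; apply: (mulIf huw); rewrite mulrAC divfK //.
- by have := congr1 ( *%R w1) hdu; rewrite mulr0; lra.
- by have := congr1 ( *%R w2) hdu; rewrite mulr0; lra.
Qed.

(* [p1 - q1 = c u0 + (lam + lam') (u1 - u0)], and parallelism to [u1] forces
   [lam + lam' = c]. *)
Lemma antipodal_chord_step p0 p1 q0 q1 u0 u1 (c lam lam' : R) :
  psub p0 q0 = pscale c u0 ->
  psub p1 p0 = pscale lam (psub u1 u0) ->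
  psub q1 q0 = pscale lam' (psub (popp u1) (popp u0)) ->
  det (psub p1 q1) u1 = 0 -> det u0 u1 != 0 ->
  psub p1 q1 = pscale c u1.
Proof.
case: p0 => a0 b0; case: p1 => a1 b1; case: q0 => c0 d0; case: q1 => c1 d1.
case: u0 => x0 y0; case: u1 => x1 y1.
rewrite /psub /pscale /popp /det /= => -[e1 e2] [e3 e4] [e5 e6] hpar hu.
have hsum : lam + lam' = c.
  by apply: (mulIf hu); nra.
by congr pair; nra.
Qed.

(* [a], [b], [c] are consecutive vertices and [z] another vertex of a convex
   polygon: a linear functional with a local minimum at [b] is larger at [z]. *)
Lemma convex_local_min_lt a b c z v :
  0 < det (psub b a) (psub c a) -> 0 < det (psub b a) (psub z a) ->
  0 < det (psub c b) (psub z b) ->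
  det b v <= det a v -> det b v < det c v -> det b v < det z v.
Proof.
case: a => a1 a2; case: b => b1 b2; case: c => c1 c2; case: z => z1 z2.
by case: v => v1 v2; rewrite /det /psub /= => *; nra.
Qed.

End PlaneAlgebra.

Lemma sum_ord_delta (R : pzSemiRingType) (m k0 : nat) (F : nat -> R) :
  (k0 < m)%N -> \sum_(k < m) (k == k0 :> nat)%:R * F k = F k0.
Proof.
move=> hk0; rewrite (bigD1 (Ordinal hk0)) //= eqxx mul1r big1 ?addr0 //.
by move=> [k hk]; rewrite -val_eqE /= => /negbTE ->; rewrite mul0r.
Qed.

Lemma support_conv_hull (R : realType) (m k0 : nat) (Q : nat -> R * R)
    (v : R * R) :
  (k0 < m)%N -> (forall k, (k < m)%N -> det (Q k) v <= det (Q k0) v) ->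
  Defs.support (conv_hull m Q) v = det (Q k0) v.
Proof.
move=> hk0 hmax; rewrite /Defs.support; set E := (X in sup X).
have E_k0 : E (det (Q k0) v).
  exists (Q k0) => //; exists (fun k => (k == k0)%:R).
  split=> [k|]; first by rewrite ler0n.
  rewrite (sum_ord_delta (fun k => (Q k).1) hk0).
  rewrite (sum_ord_delta (fun k => (Q k).2) hk0); split; last by case: (Q k0).
  by under eq_bigr do rewrite -[_%:R]mulr1; exact: (sum_ord_delta (fun=> 1) hk0).
have E_ub : ubound E (det (Q k0) v).
  move=> _ [_ [w [w_ge0 [w_sum1 ->]]] <-].
  rewrite /det /= !big_distrl -sumrB -[leRHS]mul1r -w_sum1 big_distrl /=.
  by apply: ler_sum => k _; rewrite -!mulrA -mulrBr ler_wpM2l ?hmax.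
apply/le_anti/andP; split; first by apply: ge_sup => //; exists (det (Q k0) v).
by apply: ub_le_sup => //; exists (det (Q k0) v).
Qed.

Lemma periodic_modn (T : Type) (N : nat) (Q : nat -> T) :
  (forall i, Q (i + N)%N = Q i) -> forall k, Q k = Q (k %% N)%N.
Proof.
move=> hper k; rewrite {1}(divn_eq k N) addnC.
by elim: (k %/ N)%N => [|q IH]; rewrite ?mul0n ?addn0 // mulSn addnCA addnC hper.
Qed.

Lemma nonincr_chain (R : numDomainType) (h : nat -> R) (b m : nat) :
  (forall t, (t < m)%N -> h (b + t).+1 <= h (b + t)%N) ->
  forall s t, (s <= t <= m)%N -> h (b + t)%N <= h (b + s)%N.
Proof.
move=> hdown s t /andP[hst htm].
apply: (@homo_leq_in _ [pred t | t <= m]%N (fun t => h (b + t)%N)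
  (fun x y => y <= x)) => //.
- by move=> y x z hxy hyz; apply: le_trans hyz hxy.
- by move=> i j _ /= hj k /andP[_ /ltnW hkj]; apply: leq_trans hkj hj.
- by move=> i _ /= hi; rewrite addnS; apply: hdown.
- by apply: leq_trans hst htm.
Qed.

Lemma periodic_unimodal_bounds (R : numDomainType) (h : nat -> R) (N m i : nat) :
  (forall k, h (k + N)%N = h k) -> (i < N)%N -> (m <= N)%N ->
  (forall t, (t < m)%N -> h (i + t).+1 <= h (i + t)%N) ->
  (forall t, (t < N - m)%N -> h (i + m + t)%N <= h (i + m + t).+1) ->
  forall k, h (i + m)%N <= h k <= h i.
Proof.
move=> hper hiN hmN hdown hup k.
pose s := ((k + (N - i)) %% N)%N.
have hsN : (s < N)%N by rewrite ltn_pmod //; apply: leq_ltn_trans hiN.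
have -> : h k = h (i + s)%N.
  rewrite (periodic_modn hper k) (periodic_modn hper (i + s)) modnDmr.
  by rewrite addnCA subnKC ?modnDr // ltnW.
have hup' : forall t, (t < N - m)%N -> - h (i + m + t).+1 <= - h (i + m + t)%N.
  by move=> t ht; rewrite lerN2; apply: hup.
have [hsm|hsm] := leqP s m; apply/andP; split.
- by apply: nonincr_chain hdown _ _ _; rewrite hsm leqnn.
- by have := nonincr_chain hdown (s := 0) (t := s); rewrite addn0 hsm; apply.
- have := nonincr_chain (h := fun k => - h k) hup' (s := 0) (t := (s - m)%N).
  rewrite /= addn0 -addnA subnKC ?(ltnW hsm) // lerN2; apply.
  by rewrite leq_sub2r // ltnW.
- have := nonincr_chain (h := fun k => - h k) hup' (s := (s - m)%N)
    (t := (N - m)%N).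
  rewrite /= -!addnA !subnKC ?(ltnW hsm) // hper lerN2; apply.
  by rewrite leqnn leq_sub2r // ltnW.
Qed.

Section CentralPolygon.
Variables (R : realType) (n : nat) (U P : nat -> R * R).
Hypotheses (n_ge2 : (2 <= n)%N) (U_per : forall i, U (i + 2 * n)%N = U i)
  (U_sym : forall i, U (i + n)%N = popp (U i))
  (U_convex : forall i j : nat, (j %% (2 * n) != i %% (2 * n))%N ->
      (j %% (2 * n) != i.+1 %% (2 * n))%N ->
      0 < det (psub (U i.+1) (U i)) (psub (U j) (U i)))
  (P_per : forall i, P (i + 2 * n)%N = P i)
  (P_side : forall i, exists lam : R,
      0 <= lam /\ psub (P i.+1) (P i) = pscale lam (psub (U i.+1) (U i)))
  (P_diag : forall i,
      det (psub (P i) (P (i + n)%N)) (psub (U i) (U (i + n)%N)) = 0).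

Lemma U_convex_shift i s t : (s.+1 < t < 2 * n)%N ->
  0 < det (psub (U (i + s).+1) (U (i + s)%N)) (psub (U (i + t)%N) (U (i + s)%N)).
Proof.
by move=> hst; apply: U_convex; rewrite -?addnS eqn_modDl !modn_small; lia.
Qed.

Lemma det_U_succ_gt0 k : 0 < det (U k) (U k.+1).
Proof.
have := U_convex_shift k (s := 0) (t := n); rewrite !addn0 U_sym.
rewrite /det /psub /popp /= => hU; suff /hU : (1 < n < 2 * n)%N by lra.
lia.
Qed.

Lemma P_chord_parallel k : det (psub (P k) (P (k + n)%N)) (U k) = 0.
Proof. by have := P_diag k; rewrite U_sym det_subr det_oppr; lra. Qed.

Lemma P_antipodal_chord :
  exists c, forall k, psub (P k) (P (k + n)%N) = pscale c (U k).
Proof.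
exists (det (psub (P 0) (P n)) (U 1) / det (U 0) (U 1)).
elim=> [|k IH].
  rewrite add0n; apply: parallel_scaleE; last by rewrite gt_eqF ?det_U_succ_gt0.
  by have := P_chord_parallel 0; rewrite add0n.
have [lam [_ hl]] := P_side k; have [lam' [_ hl']] := P_side (k + n).
rewrite -addSn !U_sym in hl'.
apply: antipodal_chord_step IH hl hl' _ _; first exact: P_chord_parallel.
by rewrite gt_eqF ?det_U_succ_gt0.
Qed.

Variable v : R * R.
Local Notation g k := (det (U k) v).

Lemma U_argmax : exists2 i, (i < 2 * n)%N & forall k, g k <= g i.
Proof.
have n2_gt0 : (0 < 2 * n)%N by rewrite muln_gt0 (leq_trans _ n_ge2).
have [i _ imax] :=
  @arg_maxP _ R 'I_(2 * n) (Ordinal n2_gt0) predT (fun k => g k) isT.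
exists i => // k; rewrite (periodic_modn U_per k).
exact: (imax (Ordinal (ltn_pmod k n2_gt0))).
Qed.

Lemma P_side_det k : exists2 lam : R, 0 <= lam &
  det (P k.+1) v - det (P k) v = lam * (g k.+1 - g k).
Proof.
have [lam [lam_ge0 hl]] := P_side k; exists lam => //.
by rewrite -!det_subl hl det_scalel.
Qed.

Section Maximizer.
Variable i : nat.
Hypothesis imax : forall k, g k <= g i.

Lemma U_antipode_min k : g (i + n)%N <= g k.
Proof. by have := imax (k + n)%N; rewrite !U_sym !det_oppl; lra. Qed.

Lemma U_descent t : (t < n)%N -> g (i + t).+1 <= g (i + t)%N.
Proof.
elim: t => [|t IH] ht; first by rewrite addn0 imax.
rewrite addnS leNgt; apply/negP => hlt; have hmin := U_antipode_min (i + t).+1.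
have [e|ne] := eqVneq t.+2 n.
  have e' : (i + t).+2 = (i + n)%N by rewrite -e !addnS.
  by rewrite e' in hlt; lra.
have [hA hB hC] : [/\ t.+1 < t.+2 < 2 * n, t.+1 < n < 2 * n & t.+2 < n < 2 * n]%N.
  by split; lia.
have A := U_convex_shift i hA; have B := U_convex_shift i hB.
have C := U_convex_shift i hC; rewrite !addnS in A C.
have := convex_local_min_lt A B C (IH (ltnW ht)) hlt.
by move: hmin; lra.
Qed.

Lemma U_ascent t : (t < n)%N -> g (i + n + t)%N <= g (i + n + t).+1.
Proof. by move=> ht; rewrite addnAC -addSn !U_sym !det_oppl lerN2 U_descent. Qed.

Lemma P_vertex_bounds : (i < 2 * n)%N ->
  forall k, det (P (i + n)%N) v <= det (P k) v <= det (P i) v.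
Proof.
move=> hi.
apply: (periodic_unimodal_bounds (h := fun k => det (P k) v) (N := 2 * n)) => //.
- by move=> k /=; rewrite P_per.
- by rewrite leq_pmull.
- move=> t ht; have [lam lam_ge0 hstep] := P_side_det (i + t).
  by rewrite -subr_le0 hstep mulr_ge0_le0 // subr_le0 U_descent.
- move=> t ht; have {}ht : (t < n)%N by lia.
  have [lam lam_ge0 hstep] := P_side_det (i + n + t).
  by rewrite -subr_ge0 hstep mulr_ge0 // subr_ge0 U_ascent.
Qed.

End Maximizer.
End CentralPolygon.

Theorem lemma2p4 (R : realType) (n : nat) (U P : nat -> R * R)
  (hn : (2 <= n)%N)
  (hUper : forall i, U (i + 2 * n)%N = U i)
  (hPper : forall i, P (i + 2 * n)%N = P i)
  (hUsym : forall i, U (i + n)%N = popp (U i))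
  (hUconv : forall i j : nat, (j %% (2 * n) != i %% (2 * n))%N ->
      (j %% (2 * n) != i.+1 %% (2 * n))%N ->
      0 < det (psub (U i.+1) (U i)) (psub (U j) (U i)))
  (hPint : exists i j k, det (psub (P j) (P i)) (psub (P k) (P i)) != 0)
  (hside : forall i, exists lam : R,
      0 <= lam /\ psub (P i.+1) (P i) = pscale lam (psub (U i.+1) (U i)))
  (hdiag : forall i,
      det (psub (P i) (P (i + n)%N)) (psub (U i) (U (i + n)%N)) = 0) :
  constant_width (conv_hull (2 * n) U) (conv_hull (2 * n) P).
Proof.
have [c hc] := P_antipodal_chord hn hUsym hUconv hside hdiag.
exists c => v hv; have [i hi imax] := U_argmax hn hUper v.
have Pb := P_vertex_bounds hn hUsym hUconv hPper hside imax hi.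
have hUv : Defs.support (conv_hull (2 * n) U) v = det (U i) v.
  by apply: support_conv_hull => // k _; apply: imax.
have hPv : Defs.support (conv_hull (2 * n) P) v = det (P i) v.
  by apply: support_conv_hull => // k _; case/andP: (Pb k).
have hPv' :
    Defs.support (conv_hull (2 * n) P) (popp v) = det (P (i + n)%N) (popp v).
  rewrite (periodic_modn hPper (i + n)); apply: support_conv_hull.
    by rewrite ltn_pmod // (leq_ltn_trans _ hi).
  move=> k _; rewrite -(periodic_modn hPper) !det_oppr lerN2.
  by case/andP: (Pb k).
have hU1 : Defs.support (conv_hull (2 * n) U) v = 1 := hv.
have := congr1 (fun p => det p v) (hc i).
rewrite det_subl det_scalel -hUv hU1 mulr1.
by rewrite /width hPv hPv' det_oppr.
Qed.
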